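(* Let $\Gamma$ be a finite simple graph and let $\omega\ge 2$ be an integer. If $\Gamma$ is $\omega$-clique regular, then $\omega=2$ or $\omega=\omega(\Gamma)$.
   Context: A clique of order $\omega$ ($\omega$-clique) is a set of $\omega$ pairwise adjacent vertices. A graph $\Gamma$ is $\omega$-clique regular if it has a nonempty edge set and every edge of $\Gamma$ is contained in exactly one clique of order $\omega$. $\omega(\Gamma)$ denotes the clique number of $\Gamma$, the maximum order of a clique in $\Gamma$. *)

From mathcomp Require Import all_boot.
Set Implicit Arguments. Unset Strict Implicit. Unset Printing Implicit Defensive.

Definition simple_graph (T : finType) (e : rel T) : Prop :=
  symmetric e /\ irreflexive e.

Definition is_clique (T : finType) (e : rel T) (K : {set T}) : bool :=
  [forall x in K, forall y in K, (x != y) ==> e x y].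

Definition clique_number (T : finType) (e : rel T) : nat :=
  \max_(K : {set T} | is_clique e K) #|K|.

Definition clique_regular (T : finType) (e : rel T) (w : nat) : Prop :=
  (exists x y, e x y) /\
  forall x y, e x y ->
    exists! K : {set T}, [/\ is_clique e K, #|K| = w, x \in K & y \in K].

(* Suppose w >= 3 and some clique S has w + 1 vertices. Fix two of them,
   x and y. Each of the other w - 1 >= 2 vertices z of S gives a w-clique
   S \ {z} through the edge xy, and these cliques are pairwise distinct,
   against uniqueness. So no clique exceeds w, while any edge lies in a
   w-clique: w is the clique number. *)

From mathcomp Require Import all_boot.

Set Implicit Arguments.
Unset Strict Implicit.
Unset Printing Implicit Defensive.

Lemma exists_subset_card (T : finType) (A : {set T}) n :
  n <= #|A| -> exists2 B : {set T}, B \subset A & #|B| = n.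
Proof.
move=> /card_geqP [s [uniq_s size_s sA]].
exists [set x in s]; first by apply/subsetP => x; rewrite inE => /sA.
by rewrite cardsE -size_s; apply/card_uniqP.
Qed.

Lemma setD1_inj (T : finType) (A : {set T}) :
  {in A &, injective (fun x => A :\ x)}.
Proof.
move=> x y xA yA eq_xy; apply/eqP; apply: contraT => neq_xy.
have : x \in A :\ y by rewrite !inE neq_xy xA.
by rewrite -eq_xy !inE eqxx.
Qed.

Section Cliques.

Variables (T : finType) (e : rel T).

Lemma is_cliqueP (K : {set T}) :
  reflect {in K &, forall x y, x != y -> e x y} (is_clique e K).
Proof.
apply: (iffP forall_inP) => [cK x y xK yK | cK x xK].
  by move/forall_inP: (cK x xK) => /(_ y yK) /implyP.
by apply/forall_inP => y yK; apply/implyP; apply: cK.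
Qed.

Lemma sub_clique (A K : {set T}) :
  A \subset K -> is_clique e K -> is_clique e A.
Proof.
move=> /subsetP sAK /is_cliqueP cK; apply/is_cliqueP => x y xA yA.
exact: cK (sAK x xA) (sAK y yA).
Qed.

Lemma leq_clique_number (K : {set T}) :
  is_clique e K -> #|K| <= clique_number e.
Proof. by move=> cK; apply: (leq_bigmax_cond (F := fun K : {set T} => #|K|)). Qed.

Lemma clique_regular_succ_clique w (S : {set T}) :
  clique_regular e w -> is_clique e S -> #|S| = w.+1 -> w <= 2.
Proof.
move=> [_ uniq_clique] cS card_S.
have [le_S1 | /card_gt1P [x [y [xS yS neq_xy]]]] := leqP #|S| 1.
  by rewrite -ltnS -card_S (leq_trans le_S1).
have [K0 [_ K0_unique]] := uniq_clique x y (is_cliqueP _ cS x y xS yS neq_xy).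
have drop_other z : z \in S :\ y :\ x -> S :\ z = K0.
  rewrite !inE => /and3P [neq_zx neq_zy zS].
  apply/esym/K0_unique; split; first exact: sub_clique (subD1set S z) cS.
  - by move: (cardsD1 z S); rewrite zS card_S => -[].
  - by rewrite !inE xS eq_sym neq_zx.
  - by rewrite !inE yS eq_sym neq_zy.
have sub_S : {subset S :\ y :\ x <= S}.
  by apply/subsetP; rewrite (subset_trans (subD1set _ x)) ?subD1set.
have D_le1 : #|S :\ y :\ x| <= 1.
  apply/card_le1_eqP => z z' zD z'D.
  apply: (setD1_inj (sub_S z' z'D) (sub_S z zD)).
  by rewrite (drop_other _ zD) (drop_other _ z'D).
move: D_le1 (cardsD1 y S) (cardsD1 x (S :\ y)).
rewrite card_S yS !inE neq_xy xS !add1n => D_le1 [->] ->.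
by rewrite ltnS.
Qed.

Lemma clique_regular_card_clique w (K : {set T}) :
  clique_regular e w -> 2 < w -> is_clique e K -> #|K| <= w.
Proof.
move=> reg w_gt2 cK; rewrite leqNgt; apply/negP => /exists_subset_card [S sSK].
by move/(clique_regular_succ_clique reg (sub_clique sSK cK)); rewrite leqNgt w_gt2.
Qed.

End Cliques.

Theorem theorem1 (T : finType) (e : rel T) (w : nat) :
  simple_graph e -> 2 <= w -> clique_regular e w ->
  w = 2 \/ w = clique_number e.
Proof.
move=> _ w_ge2 reg; case: (ltngtP w 2) => [w_lt2 | w_gt2 | ->]; last by left.
  by rewrite ltnNge w_ge2 in w_lt2.
right; have [[x [y exy]] uniq_clique] := reg.
have [K [[cK card_K _ _] _]] := uniq_clique x y exy.
apply/eqP; rewrite eqn_leq -{1}card_K leq_clique_number //=.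
by apply/bigmax_leqP => K' cK'; apply: clique_regular_card_clique reg w_gt2 cK'.
Qed.
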